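(* Let $\mathcal{R}=\{P_1,\dots,P_n\}$ be a set of $n$ pairwise disjoint, connected, $\alpha$-fat simple polygons in the plane. Let $R_0$ be a minimum-diameter axis-aligned rectangle that intersects or contains every region $P_i$, and let $D$ be the diameter of $R_0$. Let $L^*$ be the length of an optimal tour of $\mathcal{R}$. Then $2D\le L^*\le nD$.
   Context: A region $P$ is $\alpha$-fat (for a fixed constant $\alpha>0$) if $\mathrm{area}(P)\ge \alpha\,[\mathrm{diam}(P)]^2$. A tour of $\mathcal{R}$ is a closed curve in the plane that intersects every region $P_i$; its length is its Euclidean length. $L^*$ is the minimum length of a tour of $\mathcal{R}$. *)

From HB Require Import structures.
From mathcomp Require Import all_boot all_order all_algebra.
From mathcomp Require Import all_classical all_reals all_analysis.
Set Implicit Arguments. Unset Strict Implicit. Unset Printing Implicit Defensive.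
Import Order.TTheory GRing.Theory Num.Theory.
Import numFieldNormedType.Exports.
Local Open Scope classical_set_scope.
Local Open Scope ring_scope.

Section Plane.
Variable R : realType.
Notation pt := (R * R)%type.

Definition edist (p q : pt) : R :=
  Num.sqrt ((p.1 - q.1) ^+ 2 + (p.2 - q.2) ^+ 2).

Definition diam (A : set pt) : R :=
  sup [set edist p q | p in A & q in A].

Definition area (A : set pt) : \bar R :=
  ((@lebesgue_measure R) \x (@lebesgue_measure R))%E A.

Definition fat (alpha : R) (A : set pt) : Prop :=
  ((alpha * diam A ^+ 2)%:E <= area A)%E.

Definition segment (p q : pt) : set pt :=
  [set ((1 - t) * p.1 + t * q.1, (1 - t) * p.2 + t * q.2) | t in `[0, 1]%classic].

(* edges of the closed polygonal chain v_0 v_1 ... v_{m-1} v_0 *)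
Definition pedge (m : nat) (v : 'I_m -> pt) (i : 'I_m) : set pt :=
  segment (v i) (v (ordS i)).

Definition simple_chain (m : nat) (v : 'I_m -> pt) : Prop :=
  (3 <= m)%N /\ injective v /\
  forall i j : 'I_m, i != j ->
    pedge v i `&` pedge v j =
      if j == ordS i then [set v j]
      else if i == ordS j then [set v i]
      else set0.

Definition chain_image (m : nat) (v : 'I_m -> pt) : set pt :=
  \bigcup_(i in [set: 'I_m]) pedge v i.

(* a simple polygon (as a closed region): a compact set, equal to the closure
   of its interior, whose topological boundary is a simple closed polygonal
   chain *)
Definition simple_polygon (P : set pt) : Prop :=
  exists (m : nat) (v : 'I_m -> pt),
    simple_chain v /\ compact P /\ P = closure (interior P) /\
    closure P `\` interior P = chain_image v.

(* closed axis-aligned rectangle [a1,b1] x [a2,b2] (possibly degenerate) *)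
Definition arect (a1 b1 a2 b2 : R) : set pt :=
  [set p | a1 <= p.1 <= b1 /\ a2 <= p.2 <= b2].

Definition is_arect (Q : set pt) : Prop :=
  exists a1 b1 a2 b2, a1 <= b1 /\ a2 <= b2 /\ Q = arect a1 b1 a2 b2.

Definition curve_length (g : R -> pt) : \bar R :=
  ereal_sup [set x | exists (k : nat) (t : nat -> R),
     [/\ t 0%N = 0, t k = 1, (forall i, (i < k)%N -> t i <= t i.+1) &
          x = (\sum_(i < k) edist (g (t i)) (g (t i.+1)))%:E]].

Definition is_tour (n : nat) (P : 'I_n -> set pt) (g : R -> pt) : Prop :=
  {within `[0, 1], continuous g} /\ g 0 = g 1 /\
  forall i, exists2 t, t \in `[0, 1] & P i (g t).

Definition opt_tour_length (n : nat) (P : 'I_n -> set pt) : \bar R :=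
  ereal_inf [set curve_length g | g in is_tour P].

End Plane.

From Pilot Require Import Defs.
From HB Require Import structures.
From mathcomp Require Import all_boot all_order all_algebra.
From mathcomp Require Import all_classical all_reals all_analysis.
From mathcomp Require Import ring lra.
Import Order.TTheory GRing.Theory Num.Theory.
Import numFieldNormedType.Exports.
Local Open Scope classical_set_scope.
Local Open Scope ring_scope.

(* A tour is a closed curve, so each coordinate of a tour g runs across its
   range on g at least twice.  Splitting g at the four parameters where the
   coordinates are extremal and using the triangle inequality for the Euclidean
   norm on the inscribed polygon gives length g >= 2 sqrt (w^2 + h^2), where
   w x h is the bounding box B of g; as B is an axis-parallel rectangle meeting
   every region, diam B >= diam R0 by minimality of R0.  Conversely, a point of
   R0 chosen in each region and visited cyclically yields a closed polygon with
   n edges, each of length at most diam R0. *)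

(* Unqualified, [edist] would be the extended distance of MathComp-Analysis. *)
Local Notation edist := Defs.edist.

Section Hypot.
Context {R : rcfType}.
Implicit Types a b c d k : R.

Definition hypot a b := Num.sqrt (a ^+ 2 + b ^+ 2).

Lemma hypot_ge0 a b : 0 <= hypot a b.
Proof. exact: sqrtr_ge0. Qed.

Lemma sqr_hypot a b : hypot a b ^+ 2 = a ^+ 2 + b ^+ 2.
Proof. by rewrite sqr_sqrtr // addr_ge0 // sqr_ge0. Qed.

Lemma hypotC a b : hypot b a = hypot a b.
Proof. by rewrite /hypot addrC. Qed.

Lemma hypot_norm a b : hypot `|a| `|b| = hypot a b.
Proof. by rewrite /hypot !real_normK ?num_real. Qed.

Lemma hypotN a b : hypot (- a) (- b) = hypot a b.
Proof. by rewrite -hypot_norm !normrN hypot_norm. Qed.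

Lemma hypotZ k a b : hypot (k * a) (k * b) = `|k| * hypot a b.
Proof. by rewrite /hypot !exprMn -mulrDr sqrtrM ?sqr_ge0 // sqrtr_sqr. Qed.

Lemma ler_norm_hypot a b : `|a| <= hypot a b.
Proof. by rewrite -sqrtr_sqr ler_sqrt ?addr_ge0 ?sqr_ge0 // lerDl sqr_ge0. Qed.

Lemma ler_hypot a b c d : 0 <= a -> 0 <= b -> a <= c -> b <= d ->
  hypot a b <= hypot c d.
Proof.
move=> a0 b0 ac bd; rewrite ler_sqrt ?addr_ge0 ?sqr_ge0 //.
by apply: lerD; rewrite ler_pXn2r // nnegrE; lra.
Qed.

Lemma ler_hypotD a b c d : hypot (a + c) (b + d) <= hypot a b + hypot c d.
Proof.
have cauchy_schwarz : a * c + b * d <= hypot a b * hypot c d.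
  rewrite -sqrtrM ?addr_ge0 ?sqr_ge0 // (le_trans (ler_norm _)) //.
  rewrite -sqrtr_sqr ler_sqrt ?mulr_ge0 ?addr_ge0 ?sqr_ge0 //.
  have := sqr_ge0 (a * d - b * c); lra.
rewrite -(ler_pXn2r (_ : 0 < 2)%N) ?nnegrE ?addr_ge0 ?hypot_ge0 //.
rewrite sqrrD !sqr_hypot; lra.
Qed.

Lemma ler_hypot_sum (I : Type) (r : seq I) (F G : I -> R) :
  hypot (\sum_(i <- r) F i) (\sum_(i <- r) G i) <= \sum_(i <- r) hypot (F i) (G i).
Proof.
elim: r => [|i r IH]; first by rewrite !big_nil /hypot expr0n addr0 sqrtr0.
by rewrite !big_cons (le_trans (ler_hypotD _ _ _ _)) // lerD2l.
Qed.

End Hypot.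

Section ClosedVariation.
Context {R : realDomainType}.
Implicit Type u : nat -> R.

Lemma ler_dist_sum_dist u m n : (m <= n)%N ->
  `|u n - u m| <= \sum_(m <= i < n) `|u i.+1 - u i|.
Proof. by move=> mn; rewrite -telescope_sumr // ler_norm_sum. Qed.

Lemma closed_variation_ge u k a b : (a <= k)%N -> (b <= k)%N -> u 0%N = u k ->
  2 * `|u b - u a| <= \sum_(0 <= i < k) `|u i.+1 - u i|.
Proof.
wlog ab : a b / (a <= b)%N => [wlog_ab|] ak bk u0k.
  by case: (leqP a b) => [|/ltnW] ab; [|rewrite distrC]; apply: wlog_ab.
rewrite (@big_cat_nat _ _ _ a) ?(leq_trans ab) //= (@big_cat_nat _ _ _ b a) //=.
have := ler_dist_sum_dist u 0 a (leq0n a); have := ler_dist_sum_dist u a b ab.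
have := ler_dist_sum_dist u b k bk.
have : `|u b - u a| <= `|u a - u 0%N| + `|u k - u b|.
  have -> : u b - u a = (u k - u a) + (u b - u k) by ring.
  by rewrite u0k (distrC (u a)) (distrC (u k) (u b)) ler_normD.
lra.
Qed.

End ClosedVariation.

Section CurveLength.
Context {R : realType}.
Implicit Type g : R -> R * R.

Lemma edistE (p q : R * R) : edist p q = hypot (p.1 - q.1) (p.2 - q.2).
Proof. by []. Qed.

Lemma edistC (p q : R * R) : edist p q = edist q p.
Proof. by rewrite !edistE -hypotN !opprB. Qed.

Lemma ler_norm_fst_edist (p q : R * R) : `|p.1 - q.1| <= edist p q.
Proof. exact: ler_norm_hypot. Qed.

Lemma ler_norm_snd_edist (p q : R * R) : `|p.2 - q.2| <= edist p q.
Proof. by rewrite edistE -hypotC; exact: ler_norm_hypot. Qed.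

Lemma partition_through (l : seq R) : all (fun x => x \in `[0, 1]) l ->
  exists k (t : nat -> R), [/\ t 0%N = 0, t k = 1,
    forall i, (i < k)%N -> t i <= t i.+1 &
    forall x, x \in l -> exists2 i, (i <= k)%N & t i = x].
Proof.
move=> l01; set s := 0 :: rcons (sort <=%R l) 1.
have size_s : size s = (size l).+2 by rewrite /= size_rcons size_sort.
have sorted_s : sorted <=%R s.
  rewrite /s /= rcons_path path_sortedE; last exact: le_trans.
  rewrite sort_sorted; last exact: le_total.
  rewrite all_sort andbT; apply/andP; split.
    by apply/allP => x /(allP l01); rewrite in_itv /= => /andP[].
  have : last 0 (sort <=%R l) \in 0 :: sort <=%R l by apply: mem_last.
  rewrite in_cons => /predU1P[-> //|]; rewrite mem_sort => /(allP l01).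
  by rewrite in_itv /= => /andP[].
exists (size l).+1, (nth 0 s); split => //.
- by rewrite /s /= nth_rcons size_sort ltnn eqxx.
- move=> i ik; apply: (sorted_leq_nth le_trans lexx 0 sorted_s) => //.
  + by rewrite inE size_s ltnS ltnW.
  + by rewrite inE size_s.
- move=> x xl; have xs : x \in s.
    by rewrite /s in_cons mem_rcons in_cons mem_sort xl !orbT.
  by exists (index x s); [rewrite -ltnS -size_s index_mem | exact: nth_index].
Qed.

Lemma curve_length_le_lipschitz g K :
  (forall s t, s <= t -> edist (g s) (g t) <= K * (t - s)) ->
  (curve_length g <= K%:E)%E.
Proof.
move=> g_lip; apply: ge_ereal_sup => _ [k [t [t0 tk t_mono ->]]].
rewrite lee_fin (@le_trans _ _ (\sum_(i < k) K * (t i.+1 - t i))) //.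
  by apply: ler_sum => i _; apply/g_lip/t_mono.
rewrite -mulr_sumr -(big_mkord xpredT (fun i => t i.+1 - t i)) telescope_sumr //.
by rewrite tk t0 subr0 mulr1.
Qed.

Lemma closed_curve_length_ge g (ta tb tc td : R) :
  all (fun x => x \in `[0, 1]) [:: ta; tb; tc; td] -> g 0 = g 1 ->
  ((2 * hypot ((g tb).1 - (g ta).1) ((g td).2 - (g tc).2))%:E <= curve_length g)%E.
Proof.
move=> /partition_through[k [t [t0 tk t_mono t_onto]]] g01.
have [|ia ia_k <-] := t_onto ta; first by rewrite !inE eqxx.
have [|ib ib_k <-] := t_onto tb; first by rewrite !inE eqxx !orbT.
have [|ic ic_k <-] := t_onto tc; first by rewrite !inE eqxx !orbT.
have [|id id_k <-] := t_onto td; first by rewrite !inE eqxx !orbT.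
apply: (@le_trans _ _ (\sum_(i < k) edist (g (t i)) (g (t i.+1)))%:E); last first.
  by apply: ereal_sup_ubound; exists k, t.
rewrite lee_fin -hypot_norm -[2]ger0_norm // -hypotZ.
have g0k : g (t 0%N) = g (t k) by rewrite t0 tk.
have var_x := closed_variation_ge (fun i => (g (t i)).1) k ia ib ia_k ib_k
  (congr1 fst g0k).
have var_y := closed_variation_ge (fun i => (g (t i)).2) k ic id ic_k id_k
  (congr1 snd g0k).
rewrite big_mkord in var_x; rewrite big_mkord in var_y.
apply: (@le_trans _ _ (\sum_(i < k)
    hypot `|(g (t i.+1)).1 - (g (t i)).1| `|(g (t i.+1)).2 - (g (t i)).2|)).
  apply: le_trans (ler_hypot_sum _ _ _ _).
  by apply: ler_hypot => //; exact: mulr_ge0.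
by apply: ler_sum => i _; rewrite hypot_norm edistE -hypotN !opprB.
Qed.

End CurveLength.

Section Rectangles.
Context {R : realType}.
Variables a1 b1 a2 b2 : R.

Lemma arect_edist_le p q : arect a1 b1 a2 b2 p -> arect a1 b1 a2 b2 q ->
  edist p q <= hypot (b1 - a1) (b2 - a2).
Proof.
move=> [/andP[? ?] /andP[? ?]] [/andP[? ?] /andP[? ?]].
rewrite edistE -hypot_norm; apply: ler_hypot => //; rewrite ler_norml; apply/andP; lra.
Qed.

Lemma diam_arect_le : a1 <= b1 -> a2 <= b2 ->
  diam (arect a1 b1 a2 b2) <= hypot (b1 - a1) (b2 - a2).
Proof.
move=> ab1 ab2.
have corner : arect a1 b1 a2 b2 (a1, a2) by rewrite /arect /= !lexx ab1 ab2.
apply: ge_sup.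
  by exists (edist (a1, a2) (a1, a2)), (a1, a2) => //; exists (a1, a2).
by move=> _ [p ? [q ? <-]]; apply: arect_edist_le.
Qed.

Lemma edist_le_diam_arect p q : arect a1 b1 a2 b2 p -> arect a1 b1 a2 b2 q ->
  edist p q <= diam (arect a1 b1 a2 b2).
Proof.
move=> ? ?; apply: ub_le_sup; last by exists p => //; exists q.
by exists (hypot (b1 - a1) (b2 - a2)) => _ [x ? [y ? <-]]; apply: arect_edist_le.
Qed.

End Rectangles.

Lemma tour_length_ge_bounding_box {R : realType} {n} {P : 'I_n -> set (R * R)} {g} :
  is_tour P g -> exists2 Q, is_arect Q /\ (forall i, Q `&` P i !=set0) &
    ((2 * diam Q)%:E <= curve_length g)%E.
Proof.
move=> [g_cont [g01 g_meets]].
have x_cont : {within `[0, 1], continuous (fun t => (g t).1)}.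
  by move=> t; apply: (continuous_comp (g_cont t)); exact: cvg_fst.
have y_cont : {within `[0, 1], continuous (fun t => (g t).2)}.
  by move=> t; apply: (continuous_comp (g_cont t)); exact: cvg_snd.
have [ta ta01 x_min] := EVT_min ler01 x_cont.
have [tb tb01 x_max] := EVT_max ler01 x_cont.
have [tc tc01 y_min] := EVT_min ler01 y_cont.
have [td td01 y_max] := EVT_max ler01 y_cont.
have box t : t \in `[0, 1] -> arect (g ta).1 (g tb).1 (g tc).2 (g td).2 (g t).
  by move=> t01; rewrite /arect /= x_min // x_max // y_min // y_max.
exists (arect (g ta).1 (g tb).1 (g tc).2 (g td).2).
  split.
    by exists (g ta).1, (g tb).1, (g tc).2, (g td).2; rewrite x_min // y_min.
  by move=> i; have [t t01 Pgt] := g_meets i; exists (g t); split => //; apply: box.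
apply: le_trans (closed_curve_length_ge g ta tb tc td _ g01).
  by rewrite lee_fin ler_pM2l // diam_arect_le ?x_min ?y_min.
by rewrite /= ta01 tb01 tc01 td01.
Qed.

Section Polyline.
Context {R : realType}.
Implicit Types (x y z s t : R) (N : nat).

Definition clamp01 x : R := if x <= 0 then 0 else if 1 <= x then 1 else x.

Lemma clamp01_le0 x : x <= 0 -> clamp01 x = 0.
Proof. by rewrite /clamp01 => ->. Qed.

Lemma clamp01_ge1 x : 1 <= x -> clamp01 x = 1.
Proof. by move=> x1; rewrite /clamp01 x1; case: lerP => //; lra. Qed.

Lemma ler_clamp01 y z : y <= z -> clamp01 y <= clamp01 z.
Proof.
rewrite /clamp01 => yz.
by case: (lerP y 0); case: (lerP z 0); case: (lerP 1 y); case: (lerP 1 z); lra.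
Qed.

Lemma sum_clamp01 N x : \sum_(0 <= j < N) clamp01 (x - j%:R) =
  if x <= 0 then 0 else if N%:R <= x then N%:R else x.
Proof.
elim: N => [|N IH]; first by rewrite big_geq //; case: lerP => // /ltW ->.
rewrite big_nat_recr //= IH /clamp01 mulrS.
have := ler0n R N.
by case: (lerP x 0); case: (lerP (x - N%:R) 0); case: (lerP N%:R x);
  case: (lerP 1 (x - N%:R)); case: (lerP (1 + N%:R) x); lra.
Qed.

Lemma sum_clamp01_lipschitz N y z : y <= z ->
  \sum_(0 <= j < N) (clamp01 (z - j%:R) - clamp01 (y - j%:R)) <= z - y.
Proof.
rewrite sumrB !sum_clamp01 => yz; have := ler0n R N.
by case: (lerP y 0); case: (lerP z 0); case: (lerP N%:R y); case: (lerP N%:R z);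
  lra.
Qed.

(* On [j/N, (j+1)/N] only the j-th clamp varies, so this is the piecewise
   linear interpolation of f 0, ..., f N at the nodes j/N. *)
Definition polyline N (f : nat -> R) s : R :=
  f 0%N + \sum_(0 <= j < N) clamp01 (s * N%:R - j%:R) * (f j.+1 - f j).

Lemma polyline_node N f i : (0 < N)%N -> (i <= N)%N ->
  polyline N f (i%:R / N%:R) = f i.
Proof.
move=> N0 iN; rewrite /polyline divfK ?pnatr_eq0 -?lt0n // (@big_cat_nat _ _ _ i) //=.
rewrite (@eq_big_nat _ _ _ 0 i _ (fun j => f j.+1 - f j)); last first.
  by move=> j /andP[_ ji]; rewrite clamp01_ge1 ?mul1r // lerBrDr addrC natr1 ler_nat.
rewrite telescope_sumr // big1_seq ?addr0; first by rewrite addrC subrK.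
move=> j /andP[_]; rewrite mem_index_iota => /andP[ij _].
by rewrite clamp01_le0 ?mul0r // subr_le0 ler_nat.
Qed.

Lemma polylineB N f s t : polyline N f s - polyline N f t =
  \sum_(0 <= j < N)
    (clamp01 (s * N%:R - j%:R) - clamp01 (t * N%:R - j%:R)) * (f j.+1 - f j).
Proof.
rewrite /polyline opprD addrACA subrr add0r -sumrB.
by apply: eq_bigr => j _; rewrite mulrBl.
Qed.

End Polyline.

Lemma lipschitz_continuous {R : realType} {V : normedModType R} (f : R -> V) K :
  (forall s t, `|f s - f t| <= K * `|s - t|) -> continuous f.
Proof.
move=> f_lip x; apply/cvgrPdist_le => e e0.
have K0 : 0 <= K.
  by have := f_lip 0 1; rewrite sub0r normrN normr1 mulr1; apply: le_trans.
near=> y; apply: le_trans (f_lip _ _) _.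
apply: (@le_trans _ _ ((1 + K) * `|x - y|)); first by rewrite ler_wpM2r // lerDr.
rewrite -ler_pdivlMl ?ltr_pwDl //.
near: y; apply/nbhs_normP; exists ((1 + K)^-1 * e) => /=.
  by rewrite mulr_gt0 ?invr_gt0 ?ltr_pwDl.
by move=> y /ltW.
Unshelve. all: by end_near.
Qed.

Section PolygonCurve.
Context {R : realType}.
Variables (N : nat) (v : nat -> R * R).

Definition polygon_curve (s : R) : R * R :=
  (polyline N (fun j => (v j).1) s, polyline N (fun j => (v j).2) s).

Lemma polygon_curve_node i : (0 < N)%N -> (i <= N)%N ->
  polygon_curve (i%:R / N%:R) = v i.
Proof. by move=> N0 iN; rewrite /polygon_curve !polyline_node //; case: (v i). Qed.

Lemma polygon_curve0 : (0 < N)%N -> polygon_curve 0 = v 0%N.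
Proof. by move=> N0; rewrite -(polygon_curve_node 0 N0 (leq0n N)) mul0r. Qed.

Lemma polygon_curve1 : (0 < N)%N -> polygon_curve 1 = v N.
Proof.
by move=> N0; rewrite -(polygon_curve_node N N0 (leqnn N)) divff // pnatr_eq0 -lt0n.
Qed.

Variable D : R.
Hypothesis D_ge0 : 0 <= D.
Hypothesis v_step : forall j, (j < N)%N -> edist (v j) (v j.+1) <= D.

Lemma edist_polygon_curve_le s t :
  edist (polygon_curve s) (polygon_curve t) <= N%:R * D * `|s - t|.
Proof.
wlog st : s t / s <= t => [wlog_st|].
  by case/orP: (le_total s t) => ?; [|rewrite edistC distrC]; apply: wlog_st.
have clamp_le j : clamp01 (s * N%:R - j%:R) <= clamp01 (t * N%:R - j%:R).
  by rewrite ler_clamp01 // lerD2r ler_wpM2r.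
rewrite distrC ger0_norm ?subr_ge0 // edistE !polylineB.
apply: le_trans (ler_hypot_sum _ _ _ _) _.
apply: (@le_trans _ _ (\sum_(0 <= j < N)
    (clamp01 (t * N%:R - j%:R) - clamp01 (s * N%:R - j%:R)) * D)).
  apply: ler_sum_nat => j /andP[_ jN].
  rewrite hypotZ distrC ger0_norm ?subr_ge0 // ler_wpM2l ?subr_ge0 //.
  by rewrite -edistE edistC v_step.
rewrite -mulr_suml mulrAC ler_wpM2r //.
apply: le_trans (sum_clamp01_lipschitz _ _ _ _) _; first by rewrite ler_wpM2r.
by rewrite -mulrBl mulrC.
Qed.

Lemma polygon_curve_continuous : continuous polygon_curve.
Proof.
have coord_cont (c : R * R -> R) : (forall p q, `|c p - c q| <= edist p q) ->
    continuous (fun s => c (polygon_curve s)).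
  move=> c_le; apply: (@lipschitz_continuous _ _ _ (N%:R * D)) => a b.
  exact: le_trans (c_le _ _) (edist_polygon_curve_le _ _).
move=> s; exact: cvg_pair (coord_cont _ ler_norm_fst_edist s)
  (coord_cont _ ler_norm_snd_edist s).
Qed.

End PolygonCurve.

Lemma exists_tour_le {R : realType} {n} {P : 'I_n -> set (R * R)}
    {S : set (R * R)} {D : R} :
  (forall p q, S p -> S q -> edist p q <= D) -> (forall i, S `&` P i !=set0) ->
  exists2 g, is_tour P g & (curve_length g <= (n%:R * D)%:E)%E.
Proof.
move=> S_diam S_meets; case: n P S_meets => [|m] P S_meets.
  exists (fun=> (0, 0)).
    split; first by apply: continuous_subspaceT => x; exact: cvg_cst.
    by split => // -[].
  apply: curve_length_le_lipschitz => s t _.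
  by rewrite !mul0r edistE !subrr /hypot expr0n /= addr0 sqrtr0.
have [pt pt_in] := choice S_meets.
pose v j := pt (inord (j %% m.+1)).
have D_ge0 : 0 <= D.
  by apply: le_trans (S_diam _ _ (pt_in ord0).1 (pt_in ord0).1); exact: sqrtr_ge0.
have v_step j : (j < m.+1)%N -> edist (v j) (v j.+1) <= D.
  by move=> _; apply: S_diam; exact: (pt_in _).1.
exists (polygon_curve m.+1 v).
  split; first exact/continuous_subspaceT/(polygon_curve_continuous _ _ _ D_ge0 v_step).
  split.
    by rewrite polygon_curve0 // polygon_curve1 // /v modnn mod0n.
  move=> i; exists (i%:R / m.+1%:R).
    by rewrite in_itv /= divr_ge0 ?ler0n //= ler_pdivrMr ?ltr0n // mul1r ler_nat ltnW.
  rewrite polygon_curve_node ?(ltnW (ltn_ord i)) // /v modn_small // inord_val.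
  exact: (pt_in i).2.
apply: curve_length_le_lipschitz => s t st.
have := edist_polygon_curve_le _ _ _ D_ge0 v_step s t.
by rewrite distrC ger0_norm ?subr_ge0.
Qed.

Theorem lemma2p2 (R : realType) (alpha : R) (n : nat)
    (P : 'I_n -> set (R * R)%type) (R0 : set (R * R)%type) :
  0 < alpha ->
  (forall i j, i != j -> P i `&` P j = set0) ->
  (forall i, connected (P i)) ->
  (forall i, fat alpha (P i)) ->
  (forall i, simple_polygon (P i)) ->
  is_arect R0 ->
  (forall i, R0 `&` P i !=set0) ->
  (forall Q, is_arect Q -> (forall i, Q `&` P i !=set0) -> diam R0 <= diam Q) ->
  ((2 * diam R0)%:E <= opt_tour_length P <= (n%:R * diam R0)%:E)%E.
Proof.
move=> _ _ _ _ _ [a1 [b1 [a2 [b2 [_ [_ ->]]]]]] R0_meets R0_min.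
apply/andP; split.
  apply: le_ereal_inf_tmp => _ [g g_tour <-].
  have [Q [Q_rect Q_meets] len_g] := tour_length_ge_bounding_box g_tour.
  by apply: le_trans len_g; rewrite lee_fin ler_pM2l // R0_min.
have [g g_tour len_g] := exists_tour_le (edist_le_diam_arect a1 b1 a2 b2) R0_meets.
by apply: ge_ereal_inf; exists (curve_length g) => //; exists g.
Qed.
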